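(* Let $\{R_i\}_{i}$ be a family of commutative rings. Then the direct product $\prod_i R_i$ is locally stable if and only if each $R_i$ is locally stable.
   Context: All rings are commutative with identity. A ring $S$ has stable range 1 if whenever $aS+bS=S$ there is $y\in S$ with $a+by$ a unit. $S$ is locally stable if whenever $a,b\in S$ with $aS+bS=S$ there is $y\in S$ such that $S/(a+by)S$ has stable range 1. *)

From HB Require Import structures.
From mathcomp Require Import all_boot all_order all_algebra.
From mathcomp Require Import boolp.
Set Implicit Arguments. Unset Strict Implicit. Unset Printing Implicit Defensive.
Import GRing.Theory.
Local Open Scope ring_scope.

(* Rings are commutative with identity; the zero ring is allowed
   (comPzRingType), since quotients S/cS and empty products may be zero. *)

Definition is_unit (S : comPzRingType) (x : S) : Prop := exists u : S, x * u = 1.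

Definition comax (S : comPzRingType) (a b : S) : Prop :=
  exists x z : S, a * x + b * z = 1.

Definition stable_range1 (S : comPzRingType) : Prop :=
  forall a b : S, comax a b -> exists y : S, is_unit (a + b * y).

(* S/cS has stable range 1, written out on representatives in S:
   the class of t is a unit in S/cS iff t*u = 1 + c*w for some u, w;
   (a mod c)(S/cS) + (b mod c)(S/cS) = S/cS iff a*x + b*z = 1 + c*w. *)
Definition quot_stable_range1 (S : comPzRingType) (c : S) : Prop :=
  forall a b : S,
    (exists x z w : S, a * x + b * z = 1 + c * w) ->
    exists y u w : S, (a + b * y) * u = 1 + c * w.

Definition locally_stable (S : comPzRingType) : Prop :=
  forall a b : S, comax a b -> exists y : S, quot_stable_range1 (a + b * y).

Definition dprod_ring (I : Type) (R : I -> comPzRingType) := forall i, R i.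

Section DProd.
Variables (I : Type) (R : I -> comPzRingType).
Local Notation P := (dprod_ring R).

HB.instance Definition _ := gen_eqMixin P.
HB.instance Definition _ := gen_choiceMixin P.

Definition dp_zero : P := fun i => 0.
Definition dp_opp (f : P) : P := fun i => - f i.
Definition dp_add (f g : P) : P := fun i => f i + g i.
Definition dp_one : P := fun i => 1.
Definition dp_mul (f g : P) : P := fun i => f i * g i.

Lemma dp_addA : associative dp_add.
Proof. by move=> f g h; apply: functional_extensionality_dep => i; rewrite /dp_add addrA. Qed.
Lemma dp_addC : commutative dp_add.
Proof. by move=> f g; apply: functional_extensionality_dep => i; rewrite /dp_add addrC. Qed.
Lemma dp_add0 : left_id dp_zero dp_add.
Proof. by move=> f; apply: functional_extensionality_dep => i; rewrite /dp_add add0r. Qed.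
Lemma dp_addN : left_inverse dp_zero dp_opp dp_add.
Proof. by move=> f; apply: functional_extensionality_dep => i; rewrite /dp_add addNr. Qed.

HB.instance Definition _ := GRing.isZmodule.Build P dp_addA dp_addC dp_add0 dp_addN.

Lemma dp_mulA : associative dp_mul.
Proof. by move=> f g h; apply: functional_extensionality_dep => i; rewrite /dp_mul mulrA. Qed.
Lemma dp_mulC : commutative dp_mul.
Proof. by move=> f g; apply: functional_extensionality_dep => i; rewrite /dp_mul mulrC. Qed.
Lemma dp_mul1 : left_id dp_one dp_mul.
Proof. by move=> f; apply: functional_extensionality_dep => i; rewrite /dp_mul mul1r. Qed.
Lemma dp_mulDl : left_distributive dp_mul (@GRing.add P).
Proof. by move=> f g h; apply: functional_extensionality_dep => i; rewrite /dp_mul /= /dp_add mulrDl. Qed.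

HB.instance Definition _ := GRing.Zmodule_isComPzRing.Build P dp_mulA dp_mulC dp_mul1 dp_mulDl.
End DProd.

From mathcomp Require Import all_boot all_order all_algebra.
From mathcomp Require Import boolp.
Set Implicit Arguments. Unset Strict Implicit. Unset Printing Implicit Defensive.
Import GRing.Theory.
Local Open Scope ring_scope.

(* Every condition in the definitions is an existential equation, and equations
   in a product hold iff they hold in every factor.  Passing from the factors to
   the product is then componentwise choice of witnesses; passing from the
   product to a factor [R i] embeds the data of [R i] into the product, filling
   the other components with 1 and 0 so that the equations hold there
   trivially. *)

Section DirectProduct.
Variables (I : Type) (R : I -> comPzRingType).
Local Notation P := (dprod_ring R).

Lemma dprod_addE (f g : P) i : (f + g) i = f i + g i. Proof. by []. Qed.
Lemma dprod_mulE (f g : P) i : (f * g) i = f i * g i. Proof. by []. Qed.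
Lemma dprod_oneE i : (1 : P) i = 1. Proof. by []. Qed.
Definition dprodE := (dprod_addE, dprod_mulE, dprod_oneE).

Lemma dprod_ext (f g : P) : (forall i, f i = g i) -> f = g.
Proof. exact: functional_extensionality_dep. Qed.

Lemma dprod_choice {Q : forall i, R i -> Prop} :
  (forall i, exists x, Q i x) -> exists f : P, forall i, Q i (f i).
Proof. by move=> hQ; exists (fun i => sval (cid (hQ i))) => i; case: cid. Qed.

Definition dprod_upd (d : P) i (a : R i) : P := fun j =>
  if pselect (i = j) is left e then eq_rect i R a j e else d j.
Arguments dprod_upd d i a : clear implicits.

Lemma dprod_upd_eq d i a : dprod_upd d i a i = a.
Proof. by rewrite /dprod_upd; case: pselect => // e; rewrite (Prop_irrelevance e erefl). Qed.

Lemma dprod_upd_neq d i a j : i <> j -> dprod_upd d i a j = d j.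
Proof. by rewrite /dprod_upd; case: pselect. Qed.

Lemma comax_dprod (A B : P) i : comax A B -> comax (A i) (B i).
Proof.
case=> X [Z e]; exists (X i), (Z i).
by have := congr1 (fun f => f i) e; rewrite !dprodE.
Qed.

Lemma comax_dprod_upd i (a b : R i) :
  comax a b -> comax (dprod_upd 1 i a) (dprod_upd 0 i b).
Proof.
case=> x [z e]; exists (dprod_upd 1 i x), (dprod_upd 0 i z).
apply: dprod_ext => j; rewrite !dprodE.
have [<-|ne] := pselect (i = j); first by rewrite !dprod_upd_eq.
by rewrite !dprod_upd_neq // mulr1 mul0r addr0.
Qed.

Lemma quot_stable_range1_dprod (c : P) :
  quot_stable_range1 c <-> forall i, quot_stable_range1 (c i).
Proof.
split=> [hc i a b [x [z [w e]]] | hc A B [X [Z [W e]]]].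
  have [|y [u [w' e']]] := hc (dprod_upd 1 i a) (dprod_upd 0 i b).
    exists (dprod_upd 1 i x), (dprod_upd 0 i z), (dprod_upd 0 i w).
    apply: dprod_ext => j; rewrite !dprodE.
    have [<-|ne] := pselect (i = j); first by rewrite !dprod_upd_eq.
    by rewrite !dprod_upd_neq // mulr1 !mul0r !mulr0 !addr0.
  exists (y i), (u i), (w' i).
  by have := congr1 (fun f => f i) e'; rewrite !dprodE !dprod_upd_eq.
have hcomp i : exists y u w, (A i + B i * y) * u = 1 + c i * w.
  apply: hc; exists (X i), (Z i), (W i).
  by have := congr1 (fun f => f i) e; rewrite !dprodE.
have [y /dprod_choice [u /dprod_choice [w ew]]] := dprod_choice hcomp.
by exists y, u, w; apply: dprod_ext => i; rewrite !dprodE; apply: ew.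
Qed.

End DirectProduct.

Theorem proposition2p7 (I : Type) (R : I -> comPzRingType) :
  locally_stable (dprod_ring R) <-> (forall i : I, locally_stable (R i)).
Proof.
split=> [hP i a b hab | hR A B hAB].
  have [Y /quot_stable_range1_dprod /(_ i) hY] := hP _ _ (comax_dprod_upd hab).
  by exists (Y i); rewrite !dprodE !dprod_upd_eq in hY.
have [y hy] := dprod_choice (fun i => hR i _ _ (comax_dprod i hAB)).
by exists y; apply/quot_stable_range1_dprod.
Qed.
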